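(* Let $H:\mathbb{R}^d\times\mathbb{R}^d\to\mathbb{R}$ be $C^1$, $\alpha_H$-strongly convex in $p$ uniformly in $x$, and set $F=D_pH$, $G=-D_xH$, assumed continuous. If for all $x,y,p,q\in\mathbb{R}^d$, $(F(x,p)-F(y,q))\cdot(p-q)+(G(x,p)-G(y,q))\cdot(x-y)\ge0$, then for all $x,y,p,q\in\mathbb{R}^d$, $(F(x,p)-F(y,q))\cdot(p-q)+(G(x,p)-G(y,q))\cdot(x-y)\ge\alpha_H|p-q|^2$.
   Context: $\alpha_H$-strong convexity in $p$ uniformly in $x$: for every $x$, $p\mapsto H(x,p)-\frac{\alpha_H}2|p|^2$ is convex, with $\alpha_H>0$. *)

From HB Require Import structures.
From mathcomp Require Import all_boot all_order all_algebra.
From mathcomp Require Import all_classical all_reals all_analysis.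
Set Implicit Arguments. Unset Strict Implicit. Unset Printing Implicit Defensive.
Import Order.TTheory GRing.Theory Num.Theory.
Import numFieldNormedType.Exports.
Local Open Scope ring_scope.

Definition dotv (R : realType) (d : nat) (u v : 'rV[R]_d) : R :=
  \sum_(i < d) u 0 i * v 0 i.

Definition sqnorm (R : realType) (d : nat) (p : 'rV[R]_d) : R := dotv p p.

Definition convex_fun (R : realType) (d : nat) (f : 'rV[R]_d -> R) : Prop :=
  forall (p q : 'rV[R]_d) (t : R), 0 <= t -> t <= 1 ->
    f ((1 - t) *: p + t *: q) <= (1 - t) * f p + t * f q.

From HB Require Import structures.
From mathcomp Require Import all_boot all_order all_algebra.
From mathcomp Require Import all_classical all_reals all_analysis.
From mathcomp Require Import ring lra.
Import Order.TTheory GRing.Theory Num.Theory.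
Import numFieldNormedType.Exports.
Local Open Scope ring_scope.

(* Strong convexity in p gives, for fixed x, the tangent inequality
   H x q >= H x p + F x p . (q - p) + alphaH / 2 |q - p|^2.  Taking p = q in
   the monotonicity hypothesis shows that x |-> G x p is monotone; since it is
   the gradient of x |-> - H x p, that function is convex and lies above its
   tangents (mean value theorem on segments).  Summing the two tangent
   inequalities in p, at (x, p) and (y, q), and the two in x, at the same
   points, every value of H cancels and what remains is the claim. *)

Local Open Scope classical_set_scope.

Section DotAlgebra.
Context {R : realType} {d : nat}.
Implicit Types (u v w : 'rV[R]_d) (a : R).

Lemma dotvC u v : dotv u v = dotv v u.
Proof. by apply: eq_bigr => i _; rewrite mulrC. Qed.

Lemma dotvDl u w v : dotv (u + w) v = dotv u v + dotv w v.
Proof. by rewrite /dotv -big_split; apply: eq_bigr => i _; rewrite mxE mulrDl. Qed.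

Lemma dotvZl a u v : dotv (a *: u) v = a * dotv u v.
Proof. by rewrite /dotv mulr_sumr; apply: eq_bigr => i _; rewrite mxE mulrA. Qed.

Lemma dotvNl u v : dotv (- u) v = - dotv u v.
Proof. by rewrite -scaleN1r dotvZl mulN1r. Qed.

Lemma dotvBl u w v : dotv (u - w) v = dotv u v - dotv w v.
Proof. by rewrite dotvDl dotvNl. Qed.

Lemma dotvDr u w v : dotv v (u + w) = dotv v u + dotv v w.
Proof. by rewrite dotvC dotvDl !(dotvC v). Qed.

Lemma dotvZr a u v : dotv v (a *: u) = a * dotv v u.
Proof. by rewrite dotvC dotvZl dotvC. Qed.

Lemma dotvBr u w v : dotv v (u - w) = dotv v u - dotv v w.
Proof. by rewrite !(dotvC v) dotvBl. Qed.

Lemma dotv0r v : dotv v 0 = 0.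
Proof. by rewrite -(scale0r 0) dotvZr mul0r. Qed.

Lemma sqnormB u v : sqnorm (u - v) = sqnorm u - 2 * dotv u v + sqnorm v.
Proof. by rewrite /sqnorm !dotvBl !dotvBr (dotvC v u); ring. Qed.

Lemma sqnorm_line a u v :
  sqnorm (a *: v + u) = sqnorm u + a * (2 * dotv u v) + a ^+ 2 * sqnorm v.
Proof. by rewrite /sqnorm !dotvDl !dotvDr !dotvZl !dotvZr (dotvC v u); ring. Qed.

End DotAlgebra.

Section LineRestriction.
Context {R : numFieldType} {V W : normedModType R}.

Lemma is_derive_lineP (f : V -> W) (a v : V) (z : R) (df : W) :
  is_derive (z *: v + a) v f df <-> is_derive z 1 (fun t => f (t *: v + a)) df.
Proof.
have quotE : (fun h : R => h^-1 *: (((fun t => f (t *: v + a)) \o shift z) (h *: 1)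
      - f (z *: v + a))) =
    (fun h : R => h^-1 *: ((f \o shift (z *: v + a)) (h *: v) - f (z *: v + a))).
  by apply: funext => h /=; rewrite scaler1 scalerDl addrA.
by split=> -[dv dval]; split; rewrite /derivable /derive ?quotE // -?quotE.
Qed.

End LineRestriction.

Section Tangents.
Context {R : realType} {d : nat}.

Lemma is_derive_sqnorm (p v : 'rV[R]_d) :
  is_derive p v (@sqnorm R d) (2 * dotv p v).
Proof.
suff : is_derive (0 : R) (1 : R) (fun t => sqnorm (t *: v + p)) (2 * dotv p v).
  by move/is_derive_lineP; rewrite scale0r add0r.
have -> : (fun t => sqnorm (t *: v + p)) =
    cst (sqnorm p) + (fun t => t * (2 * dotv p v)) + (fun t => t ^+ 2 * sqnorm v).
  by apply: funext => t; rewrite sqnorm_line.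
apply: is_derive_eq.
by rewrite !(scaler0, scale0r, add0r, addr0) [_%:A]mulr1.
Qed.

Lemma derive_le_chord (g : R -> R) (dg : R) :
  is_derive (0 : R) (1 : R) g dg ->
  (forall t, 0 < t <= 1 -> g t <= (1 - t) * g 0 + t * g 1) ->
  dg <= g 1 - g 0.
Proof.
move=> [dv <-] below_chord.
have quot_cvg :
    (fun h : R => h^-1 *: ((g \o shift 0) (h *: 1) - g 0)) @ 0^'+ --> 'D_1 g 0.
  exact: cvg_dnbhs_at_right.
apply: (cvgr_to_le quot_cvg); near=> h.
have h_gt0 : 0 < h by near: h; exact: nbhs_right_gt.
have h_le1 : h <= 1 by near: h; exact: nbhs_right_le.
have := below_chord h; rewrite h_gt0 h_le1 => /(_ isT) chord.
rewrite /= addr0 [_%:A]mulr1 ler_pdivrMl //; lra.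
Unshelve. all: by end_near.
Qed.

Lemma convex_fun_ge_tangent {f : 'rV[R]_d -> R} {p q : 'rV[R]_d} {df : R} :
  convex_fun f -> is_derive p (q - p) f df -> f p + df <= f q.
Proof.
move=> f_cvx f_der.
set g := fun t : R => f (t *: (q - p) + p).
have g_der : is_derive (0 : R) (1 : R) g df.
  by apply/is_derive_lineP; rewrite scale0r add0r.
have g0 : g 0 = f p by rewrite /g scale0r add0r.
have g1 : g 1 = f q by rewrite /g scale1r subrK.
suff : df <= g 1 - g 0 by rewrite g0 g1; lra.
apply: derive_le_chord g_der _ => t /andP[t_gt0 t_le1].
rewrite g0 g1 /g.
have -> : t *: (q - p) + p = (1 - t) *: p + t *: q.
  by rewrite scalerBr scalerBl scale1r addrC addrA addrAC.
exact: f_cvx (ltW t_gt0) t_le1.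
Qed.

Lemma strongly_convex_ge_tangent (alpha : R) {f : 'rV[R]_d -> R}
    {Df : 'rV[R]_d -> 'rV[R]_d} :
  (forall p v, is_derive p v f (dotv (Df p) v)) ->
  convex_fun (fun p => f p - alpha / 2 * sqnorm p) ->
  forall p q, f p + dotv (Df p) (q - p) + alpha / 2 * sqnorm (q - p) <= f q.
Proof.
move=> f_der f_cvx p q.
have sq_der := is_derive_sqnorm p (q - p).
have h_der := is_deriveB (f_der p (q - p)) (is_deriveZ (alpha / 2) sq_der).
have := convex_fun_ge_tangent f_cvx h_der.
rewrite /= !sqnormB !dotvBr /sqnorm (dotvC q p) -[_ *: _]/(_ * _); lra.
Qed.

Lemma monotone_gradient_ge_tangent {f : 'rV[R]_d -> R} {Df : 'rV[R]_d -> 'rV[R]_d} :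
  (forall x u, is_derive x u f (dotv (Df x) u)) ->
  (forall x y, 0 <= dotv (Df x - Df y) (x - y)) ->
  forall x y, f x + dotv (Df x) (y - x) <= f y.
Proof.
move=> f_der Df_mono x y.
set v := y - x; set g := fun t : R => f (t *: v + x).
have g_der t : is_derive t (1 : R) g (dotv (Df (t *: v + x)) v).
  exact/is_derive_lineP.
have g_cont : {within `[0, 1], continuous g}.
  apply: continuous_subspaceT => t; apply: differentiable_continuous.
  exact/derivable1_diffP.
have [c /andP[c_gt0 _] mvt] := MVT (@ltr01 R) (fun t _ => g_der t) g_cont.
have slope_le : dotv (Df x) v <= dotv (Df (c *: v + x)) v.
  have := Df_mono (c *: v + x) x; rewrite addrK dotvZr dotvBl pmulr_rge0 //.
  by rewrite subr_ge0.
move: mvt; rewrite /g scale1r scale0r add0r /v subrK subr0 mulr1; lra.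
Qed.

End Tangents.

Theorem lemma4p11 (R : realType) (d : nat) (alphaH : R)
  (H : 'rV[R]_d -> 'rV[R]_d -> R) (F G : 'rV[R]_d -> 'rV[R]_d -> 'rV[R]_d) :
  0 < alphaH ->
  (* F = D_p H *)
  (forall x p v : 'rV[R]_d, is_derive p v (H x) (dotv (F x p) v)) ->
  (* G = - D_x H *)
  (forall x p u : 'rV[R]_d, is_derive x u (fun y => H y p) (- dotv (G x p) u)) ->
  (* F and G continuous (hence H is C^1) *)
  continuous (fun z : 'rV[R]_d * 'rV[R]_d => F z.1 z.2) ->
  continuous (fun z : 'rV[R]_d * 'rV[R]_d => G z.1 z.2) ->
  (* alphaH-strong convexity in p, uniformly in x *)
  (forall x : 'rV[R]_d, convex_fun (fun p => H x p - alphaH / 2 * sqnorm p)) ->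
  (forall x y p q : 'rV[R]_d,
      0 <= dotv (F x p - F y q) (p - q) + dotv (G x p - G y q) (x - y)) ->
  forall x y p q : 'rV[R]_d,
    alphaH * sqnorm (p - q)
      <= dotv (F x p - F y q) (p - q) + dotv (G x p - G y q) (x - y).
Proof.
move=> _ H_der_p H_der_x _ _ H_cvx mono x y p q.
have tangent_p z := strongly_convex_ge_tangent alphaH (H_der_p z) (H_cvx z).
have tangent_x r z w : - H z r + dotv (G z r) (w - z) <= - H w r.
  apply: (monotone_gradient_ge_tangent (f := fun w => - H w r) (Df := G^~ r)).
  - move=> u v.
    by have := is_deriveN (H_der_x u r v); rewrite opprK.
  - move=> u v.
    by have := mono u v r r; rewrite subrr dotv0r add0r.
have := tangent_p x p q; have := tangent_p y q p.
have := tangent_x p x y; have := tangent_x q y x.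
rewrite !sqnormB !dotvBl !dotvBr (dotvC q p); lra.
Qed.
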